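(* Let $\omega$ be a T-obstacle. Then every cross of $\omega$ is a minimum skeleton for $\omega$.
   Context: An obstacle $\omega$ is a simple polygon in $\mathbb{R}^2$ (a closed, bounded polygonal region without holes whose boundary does not intersect itself), assumed in general position (no three of its vertices are collinear); vertices and edges of $\omega$ are those of its boundary. $\omega$ is rectilinear if each edge is horizontal or vertical, and a rectilinear obstacle is rectilinearly-convex if any two points of $\omega$ can be joined by a shortest rectilinear path (made of horizontal and vertical segments, of minimum $\ell_1$ length) contained in $\omega$. A corner point of a rectilinear path is a point where a horizontal and a vertical segment of the path meet. A set $S$ of closed line segments is inside $\omega$ if the union of its elements is contained in $\omega$. Such an $S$ is a skeleton for $\omega$ if for every pair of points $p,q$ not in the interior of $\omega$ such that every shortest rectilinear path between $p$ and $q$ with at most one corner point meets the interior of $\omega$, each such path intersects some element of $S$; a minimum skeleton is one with the fewest segments. $B(\omega)$ is the smallest closed axis-parallel rectangle containing $\omega$; the extreme edges are the edges of $\omega$ lying on the boundary of $B(\omega)$ (exactly four: left, right, bottom, top); an extreme corner is a vertex of $\omega$ that is a common endpoint of two extreme edges. A T-obstacle is a rectilinearly-convex obstacle with exactly two extreme corners, which are adjacent (lie on a common side of $B(\omega)$). A cross of $\omega$ is a pair $\{s_H,s_V\}$ of line segments contained in $\omega$, where $s_H$ has one endpoint on each of the two horizontal extreme edges and $s_V$ has one endpoint on each of the two vertical extreme edges. *)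

From HB Require Import structures.
From mathcomp Require Import all_boot all_order all_algebra.
From mathcomp Require Import all_classical all_reals all_analysis.
Set Implicit Arguments. Unset Strict Implicit. Unset Printing Implicit Defensive.
Import Order.TTheory GRing.Theory Num.Theory.
Import numFieldNormedType.Exports.
Local Open Scope ring_scope.
Local Open Scope classical_set_scope.

Section Defs.
Context {R : realType}.
Local Notation pt := (R * R)%type.

Definition seg (a b : pt) : set pt :=
  [set p | exists t : R, 0 <= t <= 1 /\
     p = (a.1 + t * (b.1 - a.1), a.2 + t * (b.2 - a.2))].

(* A polygon is given by its cyclic list of vertices vs. *)
Definition vtx (vs : seq pt) (i : nat) : pt := nth (0, 0) vs i.
Definition nxt (vs : seq pt) (i : nat) : nat := (i.+1 %% size vs)%N.
Definition edge (vs : seq pt) (i : nat) : set pt := seg (vtx vs i) (vtx vs (nxt vs i)).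
Definition bdry (vs : seq pt) : set pt :=
  [set p | exists2 i, (i < size vs)%N & edge vs i p].

Definition collinear (a b c : pt) : bool :=
  (b.1 - a.1) * (c.2 - a.2) - (b.2 - a.2) * (c.1 - a.1) == 0.

Definition general_position (vs : seq pt) : Prop :=
  forall i j k, (i < size vs)%N -> (j < size vs)%N -> (k < size vs)%N ->
    i != j -> j != k -> i != k -> ~~ collinear (vtx vs i) (vtx vs j) (vtx vs k).

Definition simple_polygon (vs : seq pt) : Prop :=
  [/\ (3 <= size vs)%N, general_position vs,
    (forall i, (i < size vs)%N ->
       edge vs i `&` edge vs (nxt vs i) = [set vtx vs (nxt vs i)]) &
    (forall i j, (i < size vs)%N -> (j < size vs)%N -> i != j ->
       j != nxt vs i -> i != nxt vs j -> edge vs i `&` edge vs j = set0)].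

(* p lies in the unbounded (path-)component of the complement of the boundary *)
Definition in_unbounded_component (vs : seq pt) (p : pt) : Prop :=
  forall M : R, exists g : R -> pt,
    [/\ {within `[(0:R), 1]%classic, continuous g}, g 0 = p,
        (forall t : R, 0 <= t <= 1 -> ~ bdry vs (g t)) &
        M < `|(g 1).1| + `|(g 1).2|].

(* the obstacle omega: the closed bounded region enclosed by the boundary *)
Definition region (vs : seq pt) : set pt := [set p | ~ in_unbounded_component vs p].

Definition rectilinear (vs : seq pt) : Prop :=
  forall i, (i < size vs)%N ->
    (vtx vs i).1 = (vtx vs (nxt vs i)).1 \/ (vtx vs i).2 = (vtx vs (nxt vs i)).2.

Definition d1 (p q : pt) : R := `|p.1 - q.1| + `|p.2 - q.2|.
Definition rpath (ps : seq pt) : Prop :=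
  ps != [::] /\ forall i, (i.+1 < size ps)%N ->
    (nth (0,0) ps i).1 = (nth (0,0) ps i.+1).1 \/ (nth (0,0) ps i).2 = (nth (0,0) ps i.+1).2.
Definition pathset (ps : seq pt) : set pt :=
  [set p | (exists2 i, (i < size ps)%N & p = nth (0,0) ps i) \/
           (exists2 i, (i.+1 < size ps)%N & seg (nth (0,0) ps i) (nth (0,0) ps i.+1) p)].
Definition rlength (ps : seq pt) : R :=
  \sum_(i < (size ps).-1) d1 (nth (0,0) ps i) (nth (0,0) ps i.+1).

(* any two points of omega are joined by a rectilinear path inside omega of
   minimum l1 length (= the l1 distance) *)
Definition rect_convex (vs : seq pt) : Prop :=
  forall p q, region vs p -> region vs q -> exists ps : seq pt,
    [/\ rpath ps, nth (0,0) ps 0 = p, nth (0,0) ps (size ps).-1 = q,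
        pathset ps `<=` region vs & rlength ps = d1 p q].

(* the sides of B(omega), the smallest closed axis-parallel rectangle containing omega *)
Definition is_xmin (vs : seq pt) (x : R) : Prop :=
  (forall p, region vs p -> x <= p.1) /\ exists2 p, region vs p & p.1 = x.
Definition is_xmax (vs : seq pt) (x : R) : Prop :=
  (forall p, region vs p -> p.1 <= x) /\ exists2 p, region vs p & p.1 = x.
Definition is_ymin (vs : seq pt) (y : R) : Prop :=
  (forall p, region vs p -> y <= p.2) /\ exists2 p, region vs p & p.2 = y.
Definition is_ymax (vs : seq pt) (y : R) : Prop :=
  (forall p, region vs p -> p.2 <= y) /\ exists2 p, region vs p & p.2 = y.

Definition on_left (vs : seq pt) (p : pt) : Prop := exists2 x, is_xmin vs x & p.1 = x.
Definition on_right (vs : seq pt) (p : pt) : Prop := exists2 x, is_xmax vs x & p.1 = x.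
Definition on_bottom (vs : seq pt) (p : pt) : Prop := exists2 y, is_ymin vs y & p.2 = y.
Definition on_top (vs : seq pt) (p : pt) : Prop := exists2 y, is_ymax vs y & p.2 = y.

Definition left_edge (vs : seq pt) i : Prop :=
  [/\ (i < size vs)%N, on_left vs (vtx vs i) & on_left vs (vtx vs (nxt vs i))].
Definition right_edge (vs : seq pt) i : Prop :=
  [/\ (i < size vs)%N, on_right vs (vtx vs i) & on_right vs (vtx vs (nxt vs i))].
Definition bottom_edge (vs : seq pt) i : Prop :=
  [/\ (i < size vs)%N, on_bottom vs (vtx vs i) & on_bottom vs (vtx vs (nxt vs i))].
Definition top_edge (vs : seq pt) i : Prop :=
  [/\ (i < size vs)%N, on_top vs (vtx vs i) & on_top vs (vtx vs (nxt vs i))].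
Definition extreme_edge (vs : seq pt) i : Prop :=
  left_edge vs i \/ right_edge vs i \/ bottom_edge vs i \/ top_edge vs i.

Definition endpoint_of_edge (vs : seq pt) (p : pt) j : Prop :=
  p = vtx vs j \/ p = vtx vs (nxt vs j).

Definition extreme_corner (vs : seq pt) i : Prop :=
  (i < size vs)%N /\ exists j k, [/\ j != k, extreme_edge vs j, extreme_edge vs k,
      endpoint_of_edge vs (vtx vs i) j & endpoint_of_edge vs (vtx vs i) k].

Definition T_obstacle (vs : seq pt) : Prop :=
  [/\ rectilinear vs, rect_convex vs &
    exists i1 i2, [/\ i1 != i2, extreme_corner vs i1, extreme_corner vs i2,
      (forall i, extreme_corner vs i -> i = i1 \/ i = i2) &
      [\/ on_left vs (vtx vs i1) /\ on_left vs (vtx vs i2),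
          on_right vs (vtx vs i1) /\ on_right vs (vtx vs i2),
          on_bottom vs (vtx vs i1) /\ on_bottom vs (vtx vs i2) |
          on_top vs (vtx vs i1) /\ on_top vs (vtx vs i2)]]].

Definition segset (s : pt * pt) : set pt := seg s.1 s.2.

Definition cross (vs : seq pt) (sH sV : pt * pt) : Prop :=
  [/\ segset sH `<=` region vs, segset sV `<=` region vs,
    (exists i j, [/\ bottom_edge vs i, top_edge vs j &
        (edge vs i sH.1 /\ edge vs j sH.2) \/ (edge vs i sH.2 /\ edge vs j sH.1)]) &
    (exists i j, [/\ left_edge vs i, right_edge vs j &
        (edge vs i sV.1 /\ edge vs j sV.2) \/ (edge vs i sV.2 /\ edge vs j sV.1)])].

(* shortest rectilinear paths from p to q with at most one corner point
   (as point sets): the two L-shaped paths *)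
Definition Lpath (p q : pt) (P : set pt) : Prop :=
  P = seg p (q.1, p.2) `|` seg (q.1, p.2) q \/ P = seg p (p.1, q.2) `|` seg (p.1, q.2) q.

Definition inside (vs : seq pt) (S : seq (pt * pt)) : Prop :=
  forall s, s \in S -> segset s `<=` region vs.

Definition skeleton (vs : seq pt) (S : seq (pt * pt)) : Prop :=
  inside vs S /\
  forall p q, ~ interior (region vs) p -> ~ interior (region vs) q ->
    (forall P, Lpath p q P -> P `&` interior (region vs) !=set0) ->
    forall P, Lpath p q P -> exists2 s, s \in S & P `&` segset s !=set0.

Definition min_skeleton (vs : seq pt) (S : seq (pt * pt)) : Prop :=
  skeleton vs S /\ forall S', skeleton vs S' -> (size S <= size S')%N.

End Defs.

From HB Require Import structures.
From mathcomp Require Import all_boot all_order all_algebra.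
From mathcomp Require Import all_classical all_reals all_analysis.
From mathcomp Require Import lra ring zify.
Import Order.TTheory GRing.Theory Num.Theory.
Import numFieldNormedType.Exports.
Local Open Scope ring_scope.
Local Open Scope classical_set_scope.

(* Rectilinear convexity makes the obstacle orthoconvex (every horizontal and
   vertical line meets it in a segment), and the cross places it inside the
   horizontal strip spanned by [sH] and the vertical strip spanned by [sV].

   Skeleton: let p, q lie outside the interior, with both L-shaped paths
   meeting it, and suppose the path through c = (q.1, p.2) misses [sH] and
   [sV].  On the line of a leg, the point of [sH] (resp. [sV]) cannot be
   separated from an interior point by the non-interior endpoint, since
   orthoconvexity would make that endpoint interior; hence c is interior and
   [sH], [sV] cross the lines of the two legs beyond c.  An interior point on
   the other L-path then forces [sV] or [sH] to cross a leg of the first one.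

   Minimality: the two extreme corners of a T-obstacle are adjacent corners of
   the bounding box, so a whole side of the box lies in the obstacle; with the
   extreme edges on the other sides this gives nondegenerate rectangles in the
   obstacle spanning the box in both directions.  So every open vertical and
   horizontal line across the box meets the interior and must be hit by a
   skeleton, and a single segment doing so joins opposite corners of the box,
   which would be extreme corners not on a common side. *)

(** * Betweenness on the line *)

(* Throughout, [(x - a) * (x - b) <= 0] says that x lies between a and b, in either order. *)
Section RealFacts.
Context {R : realType}.
Implicit Types k p c z a b w x y u v : R.

Lemma sqr_diff_le0 {x y} : (x - y) * (x - y) <= 0 -> x = y.
Proof. by move=> h; apply/eqP; rewrite -subr_eq0 -sqrf_eq0 eq_le sqr_ge0 andbT expr2. Qed.

Lemma same_side_outside_beyond {k p c z} : 0 < (k - p) * (k - c) -> 0 <= (k - p) * (z - p) ->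
  (z - p) * (z - c) <= 0 -> z != p -> 0 < (k - c) * (c - p).
Proof.
move=> kpc kz zpc zp; have [pc|cp|pc] := ltgtP p c.
- have pz : p < z by rewrite lt_neqAle eq_sym zp /=; nra.
  have pk : p <= k by nra.
  have ck : c < k by nra.
  nra.
- have zp' : z < p by rewrite lt_neqAle zp /=; nra.
  have kp : k <= p by nra.
  have kc : k < c by nra.
  nra.
- by subst c; move: zp; rewrite (sqr_diff_le0 zpc) eqxx.
Qed.

Lemma beyond_strictly_between {k p c z} : 0 < (k - c) * (c - p) ->
  (z - p) * (z - c) <= 0 -> z != c -> (k - c) * (z - c) < 0.
Proof.
move=> kcp zpc zc; have [pc|cp|pc] := ltgtP p c.
- have zc' : z < c by rewrite lt_neqAle zc /=; nra.
  have ck : c < k by nra.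
  nra.
- have cz : c < z by rewrite lt_neqAle eq_sym zc /=; nra.
  have kc : k < c by nra.
  nra.
- by move: kcp; rewrite pc subrr mulr0 ltxx.
Qed.

Lemma opposite_sides {w p q a b} : (w - p) * (w - q) <= 0 -> w != p ->
  0 <= (a - p) * (w - p) -> 0 < (b - p) * (p - q) -> (a - p) * (b - p) <= 0.
Proof.
move=> wpq wp aw bpq; have [pq|qp|pq] := ltgtP p q.
- have pw : p < w by rewrite lt_neqAle eq_sym wp /=; nra.
  have pa : p <= a by nra.
  have bp : b < p by nra.
  nra.
- have wp' : w < p by rewrite lt_neqAle wp /=; nra.
  have ap : a <= p by nra.
  have pb : p < b by nra.
  nra.
- by subst q; move: wp; rewrite (sqr_diff_le0 wpq) eqxx.
Qed.

Lemma between_of_near {k u z x v} : (k - u) * (z - u) < 0 ->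
  `|x - k| < `|k - u| / 2 -> `|v - u| < `|k - u| / 2 -> `|v - u| < `|z - u| ->
  (v - x) * (v - z) <= 0.
Proof.
move=> kuz; have [ku|uk] := ltrP k u.
- have uz : u < z by nra.
  have -> : `|z - u| = z - u by rewrite gtr0_norm ?subr_gt0.
  rewrite !ltr_norml => /andP[x1 x2] /andP[v1 v2] /andP[d1 d2]; nra.
- have zu : z < u by nra.
  have -> : `|z - u| = u - z by rewrite ltr0_norm ?subr_lt0 ?opprB.
  rewrite !ltr_norml => /andP[x1 x2] /andP[v1 v2] /andP[d1 d2]; nra.
Qed.

Lemma between_extreme_eq {y a b} : (y - a) * (y - b) <= 0 ->
  (y <= a /\ y <= b) \/ (a <= y /\ b <= y) -> y = a \/ y = b.
Proof.
move=> yab ext; have : (y - a) * (y - b) == 0 by rewrite eq_le yab /=; case: ext => -[]; nra.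
by rewrite mulf_eq0 !subr_eq0 => /orP[] /eqP; [left | right].
Qed.

Lemma between_shift {x a b c} : (x - a) * (x - c) <= 0 -> 0 < (x - a) * (x - b) ->
  (x - b) * (x - c) <= 0.
Proof.
move=> xac xab; have [ax|xa] := ltrP a x.
  have bx : b < x by nra.
  have xc : x <= c by nra.
  nra.
have xa' : x < a.
  by rewrite lt_neqAle xa andbT; apply: contraTneq xab => ->; rewrite subrr mul0r ltxx.
have xb : x < b by nra.
have cx : c <= x by nra.
nra.
Qed.

Lemma spanning_ends {x0 x1 a b} : x0 < x1 -> x0 <= a <= x1 -> x0 <= b <= x1 ->
  (forall x, x0 < x < x1 -> (x - a) * (x - b) <= 0) ->
  (a = x0 /\ b = x1) \/ (a = x1 /\ b = x0).
Proof.
move=> x01 /andP[a0 a1] /andP[b0 b1] H.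
have mid u v : x0 <= u -> v <= x1 -> u < v -> x0 < (u + v) / 2 < x1.
  by move=> *; apply/andP; split; lra.
have [ab|ba] := lerP a b; [left | right]; split; apply/le_anti.
- rewrite a0 andbT leNgt; apply/negP => h; have := H _ (mid _ _ (lexx _) a1 h); nra.
- rewrite b1 leNgt; apply/negP => h; have := H _ (mid _ _ b0 (lexx _) h); nra.
- rewrite a1 leNgt; apply/negP => h; have := H _ (mid _ _ a0 (lexx _) h); nra.
- rewrite b0 andbT leNgt; apply/negP => h; have := H _ (mid _ _ (lexx _) b1 h); nra.
Qed.

Lemma exists_between_both {a b y} : 0 < (a - y) * (b - y) ->
  exists m, [/\ m != y, (m - y) * (m - a) <= 0 & (m - y) * (m - b) <= 0].
Proof.
move=> h; have [ab|ba] := lerP a b.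
- have [ya|ay] := ltrP y a.
  + by exists a; split; [rewrite gt_eqF | nra | nra].
  + have b_lt_y : b < y by nra.
    by exists b; split; [rewrite lt_eqF | nra | nra].
- have [yb|le_by] := ltrP y b.
  + by exists b; split; [rewrite gt_eqF | nra | nra].
  + have a_lt_y : a < y by nra.
    by exists a; split; [rewrite lt_eqF | nra | nra].
Qed.

Lemma between_affine {u w y} : (y - u) * (y - w) <= 0 ->
  exists t, 0 <= t <= 1 /\ y = u + t * (w - u).
Proof.
move=> H; have [uw|uw] := eqVneq u w.
  subst w; exists 0; split; first by rewrite lexx ler01.
  by rewrite mul0r addr0; exact: sqr_diff_le0.
have wu : w - u != 0 by rewrite subr_eq0 eq_sym.
have sq : 0 < (w - u) ^+ 2 by rewrite lt_def sqrf_eq0 wu sqr_ge0.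
exists ((y - u) / (w - u)); split; last by rewrite divfK // addrC subrK.
have -> : (y - u) / (w - u) = (y - u) * (w - u) / (w - u) ^+ 2 by field.
apply/andP; split; first by apply: divr_ge0; [nra | exact: ltW].
by rewrite ler_pdivrMr // mul1r; nra.
Qed.

End RealFacts.

(** * Segments *)

Section Segments.
Context {R : realType}.
Local Notation pt := (R * R)%type.
Implicit Types (a b u v w : pt) (x y : R).

Lemma pt_eq {u v} : u.1 = v.1 -> u.2 = v.2 -> u = v.
Proof. by case: u v => ? ? [? ?] /= -> ->. Qed.

Lemma segP a b v : seg a b v <->
  exists t, 0 <= t <= 1 /\ v.1 = a.1 + t * (b.1 - a.1) /\ v.2 = a.2 + t * (b.2 - a.2).
Proof.
split; first by case=> t [ht ->]; exists t.
by case=> t [ht [h1 h2]]; exists t; split => //; apply: pt_eq.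
Qed.

Lemma seg_between1 {a b v} : seg a b v -> (v.1 - a.1) * (v.1 - b.1) <= 0.
Proof.
case/segP=> t [/andP[t0 t1] [-> _]].
have -> : (a.1 + t * (b.1 - a.1) - a.1) * (a.1 + t * (b.1 - a.1) - b.1)
   = (t * (t - 1)) * (b.1 - a.1) ^+ 2 by ring.
by apply: mulr_le0_ge0; [nra | exact: sqr_ge0].
Qed.

Lemma seg_between2 {a b v} : seg a b v -> (v.2 - a.2) * (v.2 - b.2) <= 0.
Proof.
case/segP=> t [/andP[t0 t1] [_ ->]].
have -> : (a.2 + t * (b.2 - a.2) - a.2) * (a.2 + t * (b.2 - a.2) - b.2)
   = (t * (t - 1)) * (b.2 - a.2) ^+ 2 by ring.
by apply: mulr_le0_ge0; [nra | exact: sqr_ge0].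
Qed.

Lemma hsegE {a b v} : a.2 = b.2 ->
  seg a b v <-> v.2 = a.2 /\ (v.1 - a.1) * (v.1 - b.1) <= 0.
Proof.
move=> ab; split=> [sv|[v2 /between_affine[t [ht v1]]]].
  split; last exact: seg_between1 sv.
  by case/segP: sv => t [_ [_ ->]]; rewrite ab subrr mulr0 addr0.
by apply/segP; exists t; rewrite v2 -ab subrr mulr0 addr0.
Qed.

Lemma vsegE {a b v} : a.1 = b.1 ->
  seg a b v <-> v.1 = a.1 /\ (v.2 - a.2) * (v.2 - b.2) <= 0.
Proof.
move=> ab; split=> [sv|[v1 /between_affine[t [ht v2]]]].
  split; last exact: seg_between2 sv.
  by case/segP: sv => t [_ [-> _]]; rewrite ab subrr mulr0 addr0.
by apply/segP; exists t; rewrite v1 -ab subrr mulr0 addr0.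
Qed.

Lemma seg_sym a b : seg a b = seg b a.
Proof.
apply/seteqP; split=> v /segP[t [/andP[t0 t1] [v1 v2]]]; apply/segP; exists (1 - t);
  (split; first by apply/andP; split; lra); split; rewrite ?v1 ?v2; ring.
Qed.

Lemma seg_union_sym a c b : seg a c `|` seg c b = seg b c `|` seg c a.
Proof. by rewrite setUC (seg_sym a) (seg_sym c). Qed.

Lemma seg_start a b : seg a b a.
Proof. by apply/segP; exists 0; rewrite lexx ler01 !mul0r !addr0. Qed.

Lemma seg_end a b : seg a b b.
Proof. by rewrite seg_sym; exact: seg_start. Qed.

Lemma subseg {a b u w} : seg a b u -> seg a b w -> seg u w `<=` seg a b.
Proof.
move=> /segP[s [/andP[s0 s1] [u1 u2]]] /segP[r [/andP[r0 r1] [w1 w2]]] v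
  /segP[t [/andP[t0 t1] [v1 v2]]].
apply/segP; exists (s + t * (r - s)); split; first by apply/andP; split; nra.
by split; [rewrite v1 u1 w1 | rewrite v2 u2 w2]; ring.
Qed.

Lemma seg_meets_hline {u w y} : (y - u.2) * (y - w.2) <= 0 ->
  exists2 v, seg u w v & v.2 = y.
Proof.
move=> /between_affine[t [ht ->]].
by exists (u.1 + t * (w.1 - u.1), u.2 + t * (w.2 - u.2)) => //; exists t.
Qed.

Lemma seg_meets_vline {u w x} : (x - u.1) * (x - w.1) <= 0 ->
  exists2 v, seg u w v & v.1 = x.
Proof.
move=> /between_affine[t [ht ->]].
by exists (u.1 + t * (w.1 - u.1), u.2 + t * (w.2 - u.2)) => //; exists t.
Qed.

Lemma subseg_meets_hline {a b u w y} : seg a b u -> seg a b w ->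
  (y - u.2) * (y - w.2) <= 0 ->
  exists2 v, seg a b v & v.2 = y /\ (v.1 - u.1) * (v.1 - w.1) <= 0.
Proof.
move=> su sw /seg_meets_hline[v sv vy].
by exists v; [exact: subseg sv | split => //; exact: seg_between1 sv].
Qed.

Lemma subseg_meets_vline {a b u w x} : seg a b u -> seg a b w ->
  (x - u.1) * (x - w.1) <= 0 ->
  exists2 v, seg a b v & v.1 = x /\ (v.2 - u.2) * (v.2 - w.2) <= 0.
Proof.
move=> su sw /seg_meets_vline[v sv vx].
by exists v; [exact: subseg sv | split => //; exact: seg_between2 sv].
Qed.

Lemma seg_slope {a b u v} : seg a b u -> seg a b v ->
  (u.1 - v.1) * (b.2 - a.2) = (u.2 - v.2) * (b.1 - a.1).
Proof. by move=> /segP[s [_ [-> ->]]] /segP[t [_ [-> ->]]]; ring. Qed.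

Lemma seg_near_height {a b K} {eta : R} : 0 < eta -> seg a b K -> a.2 != b.2 ->
  exists2 r : R, 0 < r & forall y, (y - a.2) * (y - b.2) <= 0 -> `|y - K.2| < r ->
    exists2 v, seg a b v & v.2 = y /\ `|v.1 - K.1| < eta.
Proof.
move=> eta0 sK ab.
have d0 : 0 < `|b.2 - a.2| by rewrite normr_gt0 subr_eq0 eq_sym.
have m1 : 0 < `|b.1 - a.1| + 1 by have := normr_ge0 (b.1 - a.1); lra.
set r := eta * `|b.2 - a.2| / (`|b.1 - a.1| + 1).
have r0 : 0 < r by rewrite divr_gt0 ?mulr_gt0.
have rE : r * (`|b.1 - a.1| + 1) = eta * `|b.2 - a.2| by rewrite divfK ?gt_eqF.
exists r => // y /seg_meets_hline[v sv vy] yK; exists v => //; split => //.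
have : `|v.1 - K.1| * `|b.2 - a.2| = `|y - K.2| * `|b.1 - a.1|.
  by rewrite -!normrM (seg_slope sv sK) vy.
have := normr_ge0 (b.1 - a.1); have := normr_ge0 (y - K.2); nra.
Qed.

Lemma collinear_hline (y : R) (a b c : pt) : a.2 = y -> b.2 = y -> c.2 = y -> collinear a b c.
Proof. by rewrite /collinear => -> -> ->; rewrite !subrr !mulr0 mul0r subrr. Qed.

Lemma collinear_vline (x : R) (a b c : pt) : a.1 = x -> b.1 = x -> c.1 = x -> collinear a b c.
Proof. by rewrite /collinear => -> -> ->; rewrite !subrr !mulr0 mul0r subrr. Qed.

Definition swap_pt (p : pt) : pt := (p.2, p.1).
Definition swap_set (O : set pt) : set pt := [set v | O (swap_pt v)].

Lemma swap_ptK : involutive swap_pt.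
Proof. by case. Qed.

Lemma seg_swap a b : seg (swap_pt a) (swap_pt b) = swap_set (seg a b).
Proof.
by apply/seteqP; split=> v /segP[t [ht [h1 h2]]]; apply/segP; exists t.
Qed.

End Segments.

(** * Orthoconvex sets *)

Section Orthoconvex.
Context {R : realType}.
Local Notation pt := (R * R)%type.
Implicit Types (O : set pt) (u v w z : pt) (a b c d x y : R).

Definition hconvex O := forall a b x y,
  O (a, y) -> O (b, y) -> (x - a) * (x - b) <= 0 -> O (x, y).
Definition vconvex O := forall a b x y,
  O (x, a) -> O (x, b) -> (y - a) * (y - b) <= 0 -> O (x, y).

Lemma hconvex_swap {O} : hconvex (swap_set O) <-> vconvex O.
Proof. by split=> c a b x y; exact: c. Qed.

Lemma vconvex_swap {O} : vconvex (swap_set O) <-> hconvex O.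
Proof. by split=> c a b x y; exact: c. Qed.

Lemma interior_sqP O z : interior O z <-> exists2 e : R, 0 < e &
  forall v, `|v.1 - z.1| < e -> `|v.2 - z.2| < e -> O v.
Proof.
rewrite /interior /= nbhs_ballP /nbhs_ball /=.
split=> -[e e0 H]; exists e => // v.
- by move=> h1 h2; apply: H; split; rewrite /ball /= distrC.
- by case=> h1 h2; apply: H; rewrite distrC.
Qed.

Lemma interior_mem {O z} : interior O z -> O z.
Proof. by case/interior_sqP=> e e0; apply; rewrite subrr normr0. Qed.

Lemma interior_swap O z : interior (swap_set O) (swap_pt z) <-> interior O z.
Proof.
rewrite !interior_sqP; split=> -[e e0 H]; exists e => // v h1 h2.
- by case: v h1 h2 => v1 v2 h1 h2; exact: (H (v2, v1)).
- exact: H.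
Qed.

Lemma vside_corners {O} {P Q : pt} {X y0 y1} : P <> Q -> P.1 = X -> Q.1 = X ->
  P.2 = y0 \/ P.2 = y1 -> Q.2 = y0 \/ Q.2 = y1 -> O P -> O Q -> O (X, y0) /\ O (X, y1).
Proof.
move=> + P1 Q1 hP hQ OP OQ.
rewrite (surjective_pairing P) (surjective_pairing Q) P1 Q1 in OP OQ *.
by case: hP hQ OP OQ => -> [] -> OP OQ PQ; split=> //; case: PQ.
Qed.

Lemma hside_corners {O} {P Q : pt} {Y x0 x1} : P <> Q -> P.2 = Y -> Q.2 = Y ->
  P.1 = x0 \/ P.1 = x1 -> Q.1 = x0 \/ Q.1 = x1 -> O P -> O Q -> O (x0, Y) /\ O (x1, Y).
Proof.
move=> PQ P2 Q2 hP hQ OP OQ.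
have PQ' : swap_pt P <> swap_pt Q by move/(can_inj swap_ptK).
by apply: (vside_corners (O := swap_set O) PQ' P2 Q2 hP hQ); rewrite /swap_set /= swap_ptK.
Qed.

Lemma mem_rect {O a b c d x y} : hconvex O -> vconvex O ->
  O (a, c) -> O (b, c) -> O (a, d) -> O (b, d) ->
  (x - a) * (x - b) <= 0 -> (y - c) * (y - d) <= 0 -> O (x, y).
Proof. by move=> hc vc ac bc ad bd xab ycd; apply: (vc c d) => //; exact: (hc a b). Qed.

Lemma interior_rect {O a b c d x y} : hconvex O -> vconvex O ->
  O (a, c) -> O (b, c) -> O (a, d) -> O (b, d) ->
  (x - a) * (x - b) < 0 -> (y - c) * (y - d) < 0 -> interior O (x, y).
Proof.
move=> hc vc; wlog ab : a b / a < b.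
  move=> H; have [|ba|ab] := ltgtP a b; first exact: H.
    by move=> ? ? ? ?; rewrite mulrC; apply: H.
  by move=> ? ? ? ?; rewrite ab -expr2 ltNge sqr_ge0.
wlog cd : c d / c < d.
  move=> H; have [|dc|cd] := ltgtP c d; first exact: H.
    by move=> ? ? ? ? ?; rewrite [_ * (y - d)]mulrC; apply: H.
  by move=> ? ? ? ? ?; rewrite cd -expr2 ltNge sqr_ge0.
move=> ac bc ad bd xab ycd; apply/interior_sqP.
have ax : a < x by nra.
have xb : x < b by nra.
have cy : c < y by nra.
have yd : y < d by nra.
exists (Num.min (Num.min (x - a) (b - x)) (Num.min (y - c) (d - y))).
  by rewrite !lt_min !subr_gt0 ax xb cy yd.
move=> [v1 v2] /=; rewrite !lt_min !ltr_norml.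
move=> /andP[/andP[/andP[h1 h2] /andP[h3 h4]] _] /andP[_ /andP[/andP[h5 h6] /andP[h7 h8]]].
apply: (mem_rect hc vc ac bc ad bd); nra.
Qed.

End Orthoconvex.

Section BoxDensity.
Context {R : realType}.
Local Notation pt := (R * R)%type.

Definition lines_meet_interior (O : set pt) (x0 x1 y0 y1 : R) :=
  (forall x, x0 < x < x1 -> exists2 z, interior O z & z.1 = x) /\
  (forall y, y0 < y < y1 -> exists2 z, interior O z & z.2 = y).

Lemma lines_meet_interior_swap O x0 x1 y0 y1 :
  lines_meet_interior (swap_set O) y0 y1 x0 x1 -> lines_meet_interior O x0 x1 y0 y1.
Proof.
case=> [hy hx]; split=> [x /hx | y /hy] [z iz zE];
  by exists (swap_pt z); rewrite -?(interior_swap O) ?swap_ptK.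
Qed.

Context {O : set pt} {x0 x1 y0 y1 : R}.
Hypotheses (hcO : hconvex O) (vcO : vconvex O)
  (O_box : forall v, O v -> [/\ x0 <= v.1, v.1 <= x1, y0 <= v.2 & v.2 <= y1])
  (hsides_two : forall Y, Y = y0 \/ Y = y1 ->
     exists t1 t2, [/\ t1 != t2, O (t1, Y) & O (t2, Y)])
  (vsides_two : forall X, X = x0 \/ X = x1 ->
     exists t1 t2, [/\ t1 != t2, O (X, t1) & O (X, t2)]).

(* If O contains the side at height Y, the rectangle [x0, x1] x [Y, m] handles
   the vertical lines and a rectangle over two points of the opposite side the
   horizontal ones. *)
Lemma hside_lines_meet_interior Y : Y = y0 \/ Y = y1 -> O (x0, Y) -> O (x1, Y) ->
  lines_meet_interior O x0 x1 y0 y1.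
Proof.
move=> hY OY0 OY1.
have off_Y X : X = x0 \/ X = x1 -> exists2 a, a != Y & O (X, a).
  move=> /(vsides_two X)[t1 [t2 [t12 O1 O2]]].
  by have [t1Y|t1Y] := eqVneq t1 Y; [exists t2; rewrite // -t1Y eq_sym | exists t1].
have [a aY Oa] := off_Y x0 (or_introl erefl).
have [b bY Ob] := off_Y x1 (or_intror erefl).
have aYb : 0 < (a - Y) * (b - Y).
  have [_ _ /= a0 a1] := O_box _ Oa; have [_ _ /= b0 b1] := O_box _ Ob.
  by rewrite lt_def mulf_neq0 ?subr_eq0 //=; case: hY => ->; nra.
have [m [mY ma mb]] := exists_between_both aYb.
have Om0 : O (x0, m) by apply: (vcO Y a).
have Om1 : O (x1, m) by apply: (vcO Y b).
have mY2 : 0 < (m - Y) ^+ 2 by rewrite exprn_even_gt0 // subr_eq0.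
split=> [x /andP[x0x xx1] | y /andP[y0y yy1]].
  exists (x, (Y + m) / 2) => //; apply: (interior_rect hcO vcO OY0 OY1 Om0 Om1); nra.
have hY' : y0 + y1 - Y = y0 \/ y0 + y1 - Y = y1 by case: hY => ->; [right | left]; ring.
have [t1 [t2 [t12 O1 O2]]] := hsides_two _ hY'.
have OtY t : O (t, y0 + y1 - Y) -> O (t, Y).
  by move=> /O_box[/= t0 t1' _ _]; apply: (hcO x0 x1) => //; nra.
have t2t : 0 < (t1 - t2) ^+ 2 by rewrite exprn_even_gt0 // subr_eq0.
exists ((t1 + t2) / 2, y) => //.
apply: (interior_rect hcO vcO (OtY _ O1) (OtY _ O2) O1 O2); first nra.
by case: hY => ->; nra.
Qed.

End BoxDensity.

Lemma box_lines_meet_interior {R : realType} {O : set (R * R)} {x0 x1 y0 y1 : R} :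
  hconvex O -> vconvex O ->
  (forall v, O v -> [/\ x0 <= v.1, v.1 <= x1, y0 <= v.2 & v.2 <= y1]) ->
  (forall Y, Y = y0 \/ Y = y1 -> exists t1 t2, [/\ t1 != t2, O (t1, Y) & O (t2, Y)]) ->
  (forall X, X = x0 \/ X = x1 -> exists t1 t2, [/\ t1 != t2, O (X, t1) & O (X, t2)]) ->
  [\/ O (x0, y0) /\ O (x0, y1), O (x1, y0) /\ O (x1, y1),
      O (x0, y0) /\ O (x1, y0) | O (x0, y1) /\ O (x1, y1)] ->
  lines_meet_interior O x0 x1 y0 y1.
Proof.
move=> hc vc box hs vs.
have box' v : swap_set O v -> [/\ y0 <= v.1, v.1 <= y1, x0 <= v.2 & v.2 <= x1].
  by move=> /box[].
have hside := hside_lines_meet_interior hc vc box hs vs.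
have vside := hside_lines_meet_interior (hconvex_swap.2 vc) (vconvex_swap.2 hc) box' vs hs.
case=> -[c1 c2].
- by apply: lines_meet_interior_swap; exact: (vside x0 (or_introl erefl)).
- by apply: lines_meet_interior_swap; exact: (vside x1 (or_intror erefl)).
- exact: (hside y0 (or_introl erefl)).
- exact: (hside y1 (or_intror erefl)).
Qed.

Section HorizontalSpan.
Context {R : realType}.
Local Notation pt := (R * R)%type.
Context {O : set pt} {A B : pt}.
Hypotheses (hcO : hconvex O) (AB_O : seg A B `<=` O)
  (O_hspan : forall v, O v -> (v.2 - A.2) * (v.2 - B.2) <= 0).
Implicit Types (u v z p c K : pt).

Lemma hspan_nonflat {z} : interior O z -> A.2 != B.2.
Proof.
case/interior_sqP=> e e0 He; apply/eqP=> AB.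
have at_height d : `|d| < e -> z.2 + d = A.2.
  move=> de; apply: sqr_diff_le0; rewrite {2}AB.
  by apply: (O_hspan (z.1, z.2 + d)); apply: He; rewrite /= ?subrr ?normr0 // addrC addKr.
have := at_height (e / 2); have := at_height (- (e / 2)); rewrite normrN ger0_norm; lra.
Qed.

(* Near z every row of O contains points near z and, AB not being horizontal,
   a point of AB near K; horizontal convexity fills the row in between. *)
Lemma hspan_interior_between {z u K} : interior O z -> u.2 = z.2 ->
  seg A B K -> K.2 = z.2 -> (K.1 - u.1) * (z.1 - u.1) < 0 -> interior O u.
Proof.
move=> iz uz sK Kz kuz; have nonflat := hspan_nonflat iz.
case/interior_sqP: iz => e e0 He.
have g0 : 0 < `|K.1 - u.1|.
  by rewrite normr_gt0 subr_eq0; apply: contraTneq kuz => ->; rewrite subrr mul0r ltxx.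
have D0 : 0 < `|z.1 - u.1|.
  by rewrite normr_gt0 subr_eq0; apply: contraTneq kuz => ->; rewrite subrr mulr0 ltxx.
have [r r0 near] := seg_near_height (divr_gt0 g0 (ltr0Sn _ 1)) sK nonflat.
apply/interior_sqP; exists (Num.min (Num.min e r) (Num.min (`|K.1 - u.1| / 2) `|z.1 - u.1|)).
  by rewrite !lt_min e0 r0 D0 divr_gt0.
move=> [v1 v2] /=; rewrite !lt_min uz -Kz.
move=> /andP[_ /andP[v1g v1D]] /andP[/andP[v2e v2r] _].
have Oz : O (z.1, v2) by apply: He; rewrite /= ?subrr ?normr0 // -Kz.
have [w sw [wv2 wK]] := near v2 (O_hspan _ Oz) v2r.
apply: (hcO w.1 z.1) => //; first by rewrite -wv2 -surjective_pairing; exact: AB_O.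
exact: between_of_near kuz wK v1g v1D.
Qed.

Lemma hspan_same_side {z p} : interior O z -> ~ interior O p -> p.2 = z.2 ->
  exists2 K, seg A B K & K.2 = z.2 /\ 0 <= (K.1 - p.1) * (z.1 - p.1).
Proof.
move=> iz np pz; have [K sK Kz] := seg_meets_hline (O_hspan _ (interior_mem iz)).
exists K => //; split => //; rewrite leNgt; apply/negP => kpz.
exact: np (hspan_interior_between iz pz sK Kz kpz).
Qed.

Lemma hleg_beyond {p c z} : p.2 = c.2 -> ~ interior O p ->
  seg p c z -> interior O z -> (forall v, seg p c v -> ~ seg A B v) ->
  exists2 K, seg A B K & K.2 = p.2 /\ 0 < (K.1 - c.1) * (c.1 - p.1).
Proof.
move=> pc np /(hsegE pc)[zp zpc] iz avoid.
have [K sK [Kz Kp]] := hspan_same_side iz np (esym zp).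
exists K => //; split; first by rewrite Kz.
apply: same_side_outside_beyond Kp zpc _.
  rewrite ltNge; apply/negP => Kpc; apply: (avoid K) => //.
  by apply/hsegE => //; rewrite Kz zp.
by apply: contra_not_neq np => zp1; rewrite -(pt_eq zp1 zp).
Qed.

Lemma hleg_interior_end {p c z} : p.2 = c.2 -> ~ interior O p ->
  seg p c z -> interior O z -> (forall v, seg p c v -> ~ seg A B v) ->
  interior O c.
Proof.
move=> pc np sz iz avoid; have [K sK [Kp Kc]] := hleg_beyond pc np sz iz avoid.
have /(hsegE pc)[zp zpc] := sz.
have [zc|zc] := eqVneq z.1 c.1; first by rewrite -(pt_eq zc); rewrite // zp.
apply: (hspan_interior_between iz _ sK); rewrite ?Kp ?zp //.
exact: beyond_strictly_between Kc zpc zc.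
Qed.

End HorizontalSpan.

Section VerticalSpan.
Context {R : realType}.
Local Notation pt := (R * R)%type.
Context {O : set pt} {C D : pt}.
Hypotheses (vcO : vconvex O) (CD_O : seg C D `<=` O)
  (O_vspan : forall v, O v -> (v.1 - C.1) * (v.1 - D.1) <= 0).
Implicit Types (v z p c : pt).

(* The vertical statements are the horizontal ones for [swap_set O]. *)
Let hcO' : hconvex (swap_set O) := hconvex_swap.2 vcO.

Let CD_O' : seg (swap_pt C) (swap_pt D) `<=` swap_set O.
Proof. by rewrite seg_swap => v; exact: CD_O. Qed.

Let O_hspan' v : swap_set O v -> (v.2 - (swap_pt C).2) * (v.2 - (swap_pt D).2) <= 0.
Proof. exact: O_vspan. Qed.

Let avoid_swap p c : (forall v, seg p c v -> ~ seg C D v) ->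
  forall v, seg (swap_pt p) (swap_pt c) v -> ~ seg (swap_pt C) (swap_pt D) v.
Proof. by rewrite !seg_swap => avoid v; exact: avoid. Qed.

Let seg_swap_pt a b v : seg a b v -> seg (swap_pt a) (swap_pt b) (swap_pt v).
Proof. by rewrite seg_swap /swap_set /= swap_ptK. Qed.

Let seg_unswap K : seg (swap_pt C) (swap_pt D) K -> seg C D (swap_pt K).
Proof. by rewrite seg_swap. Qed.

Lemma vspan_same_side {z p} : interior O z -> ~ interior O p -> p.1 = z.1 ->
  exists2 K, seg C D K & K.1 = z.1 /\ 0 <= (K.2 - p.2) * (z.2 - p.2).
Proof.
rewrite -(interior_swap O z) -(interior_swap O p) => iz np pz.
have [K sK Kz] := hspan_same_side hcO' CD_O' O_hspan' iz np pz.
by exists (swap_pt K); [exact: seg_unswap | exact: Kz].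
Qed.

Lemma vleg_beyond {p c z} : p.1 = c.1 -> ~ interior O p ->
  seg p c z -> interior O z -> (forall v, seg p c v -> ~ seg C D v) ->
  exists2 K, seg C D K & K.1 = p.1 /\ 0 < (K.2 - c.2) * (c.2 - p.2).
Proof.
rewrite -(interior_swap O p) -(interior_swap O z).
move=> pc np /seg_swap_pt sz iz /avoid_swap avoid.
have [K sK KP] :=
  hleg_beyond (p := swap_pt p) (c := swap_pt c) hcO' CD_O' O_hspan' pc np sz iz avoid.
by exists (swap_pt K); [exact: seg_unswap | exact: KP].
Qed.

Lemma vleg_interior_end {p c z} : p.1 = c.1 -> ~ interior O p ->
  seg p c z -> interior O z -> (forall v, seg p c v -> ~ seg C D v) ->
  interior O c.
Proof.
rewrite -(interior_swap O p) -(interior_swap O z) -(interior_swap O c).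
move=> pc np /seg_swap_pt sz iz /avoid_swap avoid.
exact: (hleg_interior_end (p := swap_pt p) (c := swap_pt c) hcO' CD_O' O_hspan'
  pc np sz iz avoid).
Qed.

End VerticalSpan.

Section Lpath.
Context {R : realType}.
Local Notation pt := (R * R)%type.

Lemma Lpath_meets_cross {O : set pt} {A B C D p q : pt} : hconvex O -> vconvex O ->
  seg A B `<=` O -> seg C D `<=` O ->
  (forall v, O v -> (v.2 - A.2) * (v.2 - B.2) <= 0) ->
  (forall v, O v -> (v.1 - C.1) * (v.1 - D.1) <= 0) ->
  ~ interior O p -> ~ interior O q ->
  (seg p (q.1, p.2) `|` seg (q.1, p.2) q) `&` interior O !=set0 ->
  (seg p (p.1, q.2) `|` seg (p.1, q.2) q) `&` interior O !=set0 ->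
  exists2 v, (seg p (q.1, p.2) `|` seg (q.1, p.2) q) v & seg A B v \/ seg C D v.
Proof.
move=> hc vc AB_O CD_O hspan vspan np nq [z [Pz iz]] [w [Pw iw]].
apply: contrapT => miss; set c : pt := (q.1, p.2).
have pc : p.2 = c.2 by [].
have qc : q.1 = c.1 by [].
have avoid1 v : seg p c v -> ~ seg A B v /\ ~ seg C D v.
  by move=> sv; split=> hv; apply: miss; exists v; by [left | tauto].
have avoid2 v : seg q c v -> ~ seg A B v /\ ~ seg C D v.
  by rewrite seg_sym => sv; split=> hv; apply: miss; exists v; by [right | tauto].
have ic : interior O c.
  case: Pz => sz.
    by apply: (hleg_interior_end hc AB_O hspan pc np sz iz) => v /avoid1[].
  rewrite seg_sym in sz.
  by apply: (vleg_interior_end vc CD_O vspan qc nq sz iz) => v /avoid2[].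
have [K sK [Kp Kc]] :=
  hleg_beyond hc AB_O hspan pc np (seg_end p c) ic (fun v sv => (avoid1 v sv).1).
have [L sL [Lq Lc]] :=
  vleg_beyond vc CD_O vspan qc nq (seg_end q c) ic (fun v sv => (avoid2 v sv).2).
case: Pw => sw.
- have [w1 w2] := (vsegE (erefl : p.1 = (p.1, q.2).1)).1 sw.
  have wp : w.2 != p.2 by apply: contra_not_neq np => wp2; rewrite -(pt_eq w1 wp2).
  have [M sM [Mw Mp]] := vspan_same_side vc CD_O vspan iw np (esym w1).
  have := opposite_sides w2 wp Mp Lc; rewrite -mulrNN !opprB => MLp.
  have [Q sQ [Qp QML]] := subseg_meets_hline sM sL MLp.
  have pcQ : seg p c Q by apply/hsegE; split => //; move: QML; rewrite Mw w1 Lq.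
  by case: (avoid1 Q pcQ).
- have [w2 w1] := (hsegE (erefl : (p.1, q.2).2 = q.2)).1 sw.
  have wq : w.1 != q.1 by apply: contra_not_neq nq => wq1; rewrite -(pt_eq wq1 w2).
  have [N sN [Nw Nq]] := hspan_same_side hc AB_O hspan iw nq (esym w2).
  rewrite mulrC in w1; have := opposite_sides w1 wq Nq Kc; rewrite -mulrNN !opprB => NKq.
  have [Q sQ [Qq QNK]] := subseg_meets_vline sN sK NKq.
  have qcQ : seg q c Q by apply/vsegE; split => //; move: QNK; rewrite Nw w2 Kp.
  by case: (avoid2 Q qcQ).
Qed.

End Lpath.

(** * Rectilinear convexity *)

Section L1Convex.
Context {R : realType}.
Local Notation pt := (R * R)%type.
Implicit Types (a b c : pt) (l ps : seq pt) (O : set pt).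

Lemma d1_triangle a b c : d1 a c <= d1 a b + d1 b c.
Proof. by rewrite /d1; have := ler_distD b.1 a.1 c.1; have := ler_distD b.2 a.2 c.2; lra. Qed.

Lemma d1xx a : d1 a a = 0.
Proof. by rewrite /d1 !subrr normr0 addr0. Qed.

Lemma rlength_cons a b l : rlength (a :: b :: l) = d1 a b + rlength (b :: l).
Proof. by rewrite /rlength /= big_ord_recl. Qed.

Lemma rlength_ge_d1 a l : d1 a (last a l) <= rlength (a :: l).
Proof.
elim: l a => [|b l IH] a; first by rewrite /rlength big_ord0 d1xx.
by rewrite rlength_cons; apply: le_trans (d1_triangle a b _) _; rewrite lerD2l IH.
Qed.

Lemma rlength_through a l c : c \in a :: l ->
  d1 a c + d1 c (last a l) <= rlength (a :: l).
Proof.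
elim: l a => [|b l IH] a.
  by rewrite inE => /eqP ->; rewrite /rlength big_ord0 d1xx addr0.
rewrite inE => /orP[/eqP ->|/IH cl].
  by rewrite d1xx add0r; exact: rlength_ge_d1 a (b :: l).
by rewrite rlength_cons; have := d1_triangle a b c; rewrite /=; lra.
Qed.

Lemma pathset_hline a l (x y : R) : (forall c, c \in a :: l -> c.2 = y) ->
  (x - a.1) * (x - (last a l).1) <= 0 -> pathset (a :: l) (x, y).
Proof.
elim: l a => [|b l IH] a /= ly xal.
  left; exists 0%N => //=.
  by apply: pt_eq; [exact: sqr_diff_le0 xal | rewrite /= (ly a) ?mem_head].
have ay := ly a (mem_head _ _); have [|xab] := lerP ((x - a.1) * (x - b.1)) 0.
  by right; exists 0%N => //=; apply/hsegE; rewrite /= ?ay ?(ly b) // !inE eqxx orbT.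
have lyb c : c \in b :: l -> c.2 = y by move=> cl; apply: ly; rewrite inE cl orbT.
by have [[i hi ->]|[i hi si]] := IH b lyb (between_shift xal xab); [left | right]; exists i.+1.
Qed.

Definition l1_convex O := forall p q, O p -> O q -> exists ps : seq pt,
  [/\ ps != [::], nth (0, 0) ps 0 = p, nth (0, 0) ps (size ps).-1 = q,
      pathset ps `<=` O & rlength ps = d1 p q].

Lemma l1_convex_hconvex {O} : l1_convex O -> hconvex O.
Proof.
move=> cO a b x y Oa Ob xab.
have [[|c l] [//= _ -> cl sub len]] := cO _ _ Oa Ob.
rewrite nth_last /= in cl; apply: sub; apply: pathset_hline; last by rewrite cl.
move=> v /rlength_through; rewrite len cl /d1 /= subrr normr0 addr0 => h.
have := ler_distD v.1 a b; have := normr_ge0 (y - v.2) => yv tri.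
have : `|v.2 - y| <= 0 by lra.
by rewrite normr_le0 subr_eq0 => /eqP.
Qed.

Lemma d1_swap a b : d1 (swap_pt a) (swap_pt b) = d1 a b.
Proof. by rewrite /d1 addrC. Qed.

Lemma rlength_map_swap ps : rlength (map swap_pt ps) = rlength ps.
Proof.
rewrite /rlength size_map; apply: eq_bigr => i _.
by rewrite !(nth_map (0, 0)) ?d1_swap //; case: i => i /=; lia.
Qed.

Lemma pathset_map_swap ps v : pathset (map swap_pt ps) v -> pathset ps (swap_pt v).
Proof.
case=> -[i]; rewrite size_map => hi; [move=> -> | move=> si]; [left | right]; exists i => //.
  by rewrite (nth_map (0, 0)) // swap_ptK.
by move: si; rewrite !(nth_map (0, 0)) ?seg_swap //; exact: ltnW.
Qed.

Lemma l1_convex_swap {O} : l1_convex O -> l1_convex (swap_set O).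
Proof.
move=> cO p q Op Oq; have [ps [ps0 hp hq sub len]] := cO _ _ Op Oq.
have ps_gt0 : (0 < size ps)%N by rewrite lt0n size_eq0.
exists (map swap_pt ps); split.
- by rewrite -size_eq0 size_map size_eq0.
- by rewrite (nth_map (0, 0)) // hp swap_ptK.
- by rewrite size_map (nth_map (0, 0)) ?hq ?swap_ptK // ltn_predL.
- by move=> v /pathset_map_swap /sub.
- by rewrite rlength_map_swap len d1_swap.
Qed.

End L1Convex.

Lemma rect_convex_l1 {R : realType} {vs : seq (R * R)} :
  rect_convex vs -> l1_convex (region vs).
Proof. by move=> rc p q rp rq; have [ps [[ps0 _] ? ? ? ?]] := rc p q rp rq; exists ps. Qed.

(** * Polygons and their bounding box *)

Section Polygon.
Context {R : realType} {vs : seq (R * R)}.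
Local Notation pt := (R * R)%type.
Local Notation n := (size vs).
Lemma nxtE j : (j < n)%N -> nxt vs j = if (j.+1 < n)%N then j.+1 else 0%N.
Proof.
move=> hj; rewrite /nxt; case: ifP => h; first by rewrite modn_small.
have -> : j.+1 = n by lia.
by rewrite modnn.
Qed.

Lemma nxt_lt {j} : (j < n)%N -> (nxt vs j < n)%N.
Proof. by move=> hj; rewrite nxtE //; case: ifP => //; lia. Qed.

Lemma nxt_onto {j} : (j < n)%N -> exists2 i, (i < n)%N & nxt vs i = j.
Proof.
case: j => [|j] hj; [exists n.-1 | exists j]; try lia;
  by rewrite nxtE; [case: ifP; lia | lia].
Qed.

Hypotheses (n3 : (3 <= n)%N) (gp : general_position vs).

Lemma nxt_neq {j} : (j < n)%N -> nxt vs j != j.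
Proof. by move=> hj; rewrite nxtE //; case: ifP; lia. Qed.

Lemma nxt2_neq {j} : (j < n)%N -> nxt vs (nxt vs j) != j.
Proof. by move=> hj; rewrite nxtE ?nxt_lt // nxtE //; do 2 case: ifP; lia. Qed.

Lemma vtx_inj {i j} : (i < n)%N -> (j < n)%N -> vtx vs i = vtx vs j -> i = j.
Proof.
move=> hi hj e; apply/eqP; apply: contraT => ij.
pose k := if (0 != i) && (0 != j) then 0%N else if (1 != i) && (1 != j) then 1%N else 2%N.
have hk : (k < n)%N by rewrite /k; repeat case: ifP => _; lia.
have ki : i != k by rewrite /k; repeat case: ifP; lia.
have kj : j != k by rewrite /k; repeat case: ifP; lia.
have := gp _ _ _ hi hj hk ij kj ki.
by rewrite e /collinear !subrr !mul0r subrr eqxx.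
Qed.

Lemma vtx_nxt_neq {i} : (i < n)%N -> vtx vs i <> vtx vs (nxt vs i).
Proof. by move=> hi /(vtx_inj hi (nxt_lt hi)) e; move: (nxt_neq hi); rewrite -e eqxx. Qed.

Lemma edges_not_on_line (L : set pt) j k :
  (forall a b c, L a -> L b -> L c -> collinear a b c) ->
  (j < n)%N -> (k < n)%N -> j != k ->
  L (vtx vs j) -> L (vtx vs (nxt vs j)) -> L (vtx vs k) -> L (vtx vs (nxt vs k)) -> False.
Proof.
move=> Lcol hj hk jk Lj Lj' Lk Lk'.
have hj' := nxt_lt hj; have hk' := nxt_lt hk.
have jj' : j != nxt vs j by rewrite eq_sym nxt_neq.
have [kj'|kj'] := eqVneq k (nxt vs j).
- subst k; have j'k' : nxt vs j != nxt vs (nxt vs j) by rewrite eq_sym nxt_neq.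
  have jk' : j != nxt vs (nxt vs j) by rewrite eq_sym nxt2_neq.
  by have := gp _ _ _ hj hj' hk' jj' j'k' jk'; rewrite Lcol.
- have j'k : nxt vs j != k by rewrite eq_sym.
  by have := gp _ _ _ hj hj' hk jj' j'k jk; rewrite Lcol.
Qed.

End Polygon.

Section Region.
Context {R : realType} {vs : seq (R * R)}.
Local Notation pt := (R * R)%type.
Implicit Types (p v z : pt).

Lemma bdry_region {p} : bdry vs p -> region vs p.
Proof.
move=> hb hu; have [g [_ g0 nb _]] := hu 0.
by apply: (nb 0); rewrite ?lexx ?ler01 ?g0.
Qed.

Lemma vtx_region {i} : (i < size vs)%N -> region vs (vtx vs i).
Proof. by move=> hi; apply: bdry_region; exists i => //; exact: seg_start. Qed.

Lemma edge_hline {i p Y} : (vtx vs i).2 = Y -> (vtx vs (nxt vs i)).2 = Y ->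
  edge vs i p -> p.2 = Y.
Proof. by move=> e1 e2 /(hsegE (etrans e1 (esym e2)))[-> _]. Qed.

Lemma edge_vline {i p X} : (vtx vs i).1 = X -> (vtx vs (nxt vs i)).1 = X ->
  edge vs i p -> p.1 = X.
Proof. by move=> e1 e2 /(vsegE (etrans e1 (esym e2)))[-> _]. Qed.

Lemma continuous_hline_param (a b d : R) : continuous (fun t : R => (a + t * d, b)).
Proof.
move=> t; apply: (@cvg_pair _ _ _ (nbhs t) (nbhs (a + t * d)) (nbhs b)); last exact: cvg_cst.
by apply: cvgD; [exact: cvg_cst | apply: cvgM; [exact: cvg_id | exact: cvg_cst]].
Qed.

Lemma ray_not_region {z} {d : R} : `|d| = 1 -> ~ bdry vs z ->
  (forall s, 0 < s -> ~ bdry vs (z.1 + s * d, z.2)) -> ~ region vs z.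
Proof.
move=> d1 nz ray; apply => M.
set L := `|M| + `|z.1| + 1.
have L0 : 0 < L by rewrite /L; have := normr_ge0 M; have := normr_ge0 z.1; lra.
exists (fun t => (z.1 + t * (L * d), z.2)); split.
- exact/continuous_subspaceT/continuous_hline_param.
- by apply: pt_eq => /=; rewrite ?mul0r ?addr0.
- move=> t /andP[t0 _]; have [->|tn] := eqVneq t 0.
    by rewrite mul0r addr0 -surjective_pairing.
  by rewrite mulrA; apply: ray; rewrite mulr_gt0 // lt_def tn.
- rewrite /= mul1r; have := ler_normB (z.1 + L * d) z.1.
  rewrite addrAC subrr add0r normrM d1 mulr1 gtr0_norm //.
  have := ler_norm M; have := normr_ge0 z.2; rewrite /L; lra.
Qed.

Lemma hedge_points {i Y} : (3 <= size vs)%N -> general_position vs -> (i < size vs)%N ->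
  (vtx vs i).2 = Y -> (vtx vs (nxt vs i)).2 = Y ->
  exists t1 t2, [/\ t1 != t2, region vs (t1, Y) & region vs (t2, Y)].
Proof.
move=> n3 gp hi <- e2; exists (vtx vs i).1, (vtx vs (nxt vs i)).1; split.
- by apply: contra_not_neq (vtx_nxt_neq n3 gp hi) => e1; exact: pt_eq.
- by rewrite -surjective_pairing; exact: vtx_region.
- by rewrite -e2 -surjective_pairing; exact/vtx_region/nxt_lt.
Qed.

Lemma vedge_points {i X} : (3 <= size vs)%N -> general_position vs -> (i < size vs)%N ->
  (vtx vs i).1 = X -> (vtx vs (nxt vs i)).1 = X ->
  exists t1 t2, [/\ t1 != t2, region vs (X, t1) & region vs (X, t2)].
Proof.
move=> n3 gp hi <- e1; exists (vtx vs i).2, (vtx vs (nxt vs i)).2; split.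
- by apply: contra_not_neq (vtx_nxt_neq n3 gp hi) => e2; exact: pt_eq.
- by rewrite -surjective_pairing; exact: vtx_region.
- by rewrite -e1 -surjective_pairing; exact/vtx_region/nxt_lt.
Qed.

End Region.

Section BoundingBox.
Context {R : realType} {vs : seq (R * R)} {x0 x1 y0 y1 : R}.
Local Notation pt := (R * R)%type.
Implicit Types (p v z : pt).
Hypotheses (hx0 : is_xmin vs x0) (hx1 : is_xmax vs x1)
  (hy0 : is_ymin vs y0) (hy1 : is_ymax vs y1).

Lemma region_box {v} : region vs v -> [/\ x0 <= v.1, v.1 <= x1, y0 <= v.2 & v.2 <= y1].
Proof. by move=> rv; split; [apply: hx0.1 | apply: hx1.1 | apply: hy0.1 | apply: hy1.1]. Qed.

Lemma on_left_eq {p} : on_left vs p -> p.1 = x0.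
Proof.
case=> x [xle [q rq qx]] ->; have [x0le [q' rq' q'x0]] := hx0.
by apply/le_anti/andP; split; [rewrite -q'x0 xle | rewrite -qx x0le].
Qed.

Lemma on_right_eq {p} : on_right vs p -> p.1 = x1.
Proof.
case=> x [xle [q rq qx]] ->; have [x1le [q' rq' q'x1]] := hx1.
by apply/le_anti/andP; split; [rewrite -qx x1le | rewrite -q'x1 xle].
Qed.

Lemma on_bottom_eq {p} : on_bottom vs p -> p.2 = y0.
Proof.
case=> y [yle [q rq qy]] ->; have [y0le [q' rq' q'y0]] := hy0.
by apply/le_anti/andP; split; [rewrite -q'y0 yle | rewrite -qy y0le].
Qed.

Lemma on_top_eq {p} : on_top vs p -> p.2 = y1.
Proof.
case=> y [yle [q rq qy]] ->; have [y1le [q' rq' q'y1]] := hy1.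
by apply/le_anti/andP; split; [rewrite -qy y1le | rewrite -q'y1 yle].
Qed.

Lemma vside_bdry {z} : region vs z -> z.1 = x0 \/ z.1 = x1 -> bdry vs z.
Proof.
move=> rz zX; apply: contrapT => nb.
have [d [d1 out]] : exists d : R,
    `|d| = 1 /\ forall s, 0 < s -> ~ region vs (z.1 + s * d, z.2).
  case: zX => zX; [exists (-1) | exists 1]; rewrite ?normrN normr1;
    by split=> // s s0 /region_box[]; rewrite /= zX; lra.
by apply: (ray_not_region d1 nb _ rz) => s s0 /bdry_region; exact: out.
Qed.

Lemma box_corner_vtx {X Y} : rectilinear vs -> X = x0 \/ X = x1 -> Y = y0 \/ Y = y1 ->
  bdry vs (X, Y) -> exists2 j, (j < size vs)%N & vtx vs j = (X, Y).
Proof.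
move=> rl hX hY [i hi sXY]; have hi' := nxt_lt hi.
have [a0 a1 a2 a3] := region_box (vtx_region hi).
have [b0 b1 b2 b3] := region_box (vtx_region hi').
case: (rl i hi) => ab.
- have [/= Xa] := (vsegE ab).1 sXY.
  case/between_extreme_eq; first by case: hY => ->; [left | right].
    by exists i => //; apply: pt_eq.
  by exists (nxt vs i) => //; apply: pt_eq; rewrite /= -?ab.
- have [/= Ya] := (hsegE ab).1 sXY.
  case/between_extreme_eq; first by case: hX => ->; [left | right].
    by exists i => //; apply: pt_eq.
  by exists (nxt vs i) => //; apply: pt_eq; rewrite /= -?ab.
Qed.

Lemma extreme_edge_lt {e} : extreme_edge vs e -> (e < size vs)%N.
Proof. by case=> [[]|[[]|[[]|[]]]]. Qed.

Lemma vedge_extreme {k X} : (k < size vs)%N -> X = x0 \/ X = x1 ->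
  (vtx vs k).1 = X -> (vtx vs (nxt vs k)).1 = X -> extreme_edge vs k.
Proof.
by move=> hk [] -> e1 e2; [left | right; left]; split=> //;
  [exists x0 | exists x0 | exists x1 | exists x1].
Qed.

Lemma hedge_extreme {k Y} : (k < size vs)%N -> Y = y0 \/ Y = y1 ->
  (vtx vs k).2 = Y -> (vtx vs (nxt vs k)).2 = Y -> extreme_edge vs k.
Proof.
by move=> hk [] -> e1 e2; [right; right; left | right; right; right]; split=> //;
  [exists y0 | exists y0 | exists y1 | exists y1].
Qed.

Lemma box_corner_extreme {X Y} : (3 <= size vs)%N -> general_position vs -> rectilinear vs ->
  X = x0 \/ X = x1 -> Y = y0 \/ Y = y1 -> region vs (X, Y) ->
  exists2 j, extreme_corner vs j & vtx vs j = (X, Y).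
Proof.
move=> n3 gp rl hX hY rXY.
have [j hj ej] := box_corner_vtx rl hX hY (vside_bdry rXY hX).
have [i hi ij] := nxt_onto hj; have hj' := nxt_lt hj.
have ij0 : i != j by rewrite -ij eq_sym nxt_neq.
have jj' : j != nxt vs j by rewrite eq_sym nxt_neq.
have ij' : i != nxt vs j by rewrite -ij eq_sym nxt2_neq.
have ncol := gp _ _ _ hi hj hj' ij0 jj' ij'.
have [Xj Yj] : (vtx vs j).1 = X /\ (vtx vs j).2 = Y by rewrite ej.
have [ext_j ext_i] : extreme_edge vs j /\ extreme_edge vs i.
  case: (rl j hj) => ej'; case: (rl i hi); rewrite ij => ei.
  - by move: ncol; rewrite (collinear_vline _ _ _ _ ei) -?ej'.
  - split; [apply: (vedge_extreme hj hX) | apply: (hedge_extreme hi hY)];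
      by rewrite ?ij -?ej' ?ei.
  - split; [apply: (hedge_extreme hj hY) | apply: (vedge_extreme hi hX)];
      by rewrite ?ij -?ej' ?ei.
  - by move: ncol; rewrite (collinear_hline _ _ _ _ ei) -?ej'.
exists j => //; split=> //; exists j, i.
by split; rewrite 1?eq_sym //; [left | right; rewrite ij].
Qed.

Lemma extreme_edge_vside_or_hline {e v} : extreme_edge vs e -> endpoint_of_edge vs v e ->
  (v.1 = x0 \/ v.1 = x1) \/ ((vtx vs e).2 = v.2 /\ (vtx vs (nxt vs e)).2 = v.2).
Proof.
case=> [[_ l1 l2]|[[_ r1 r2]|[[_ b1 b2]|[_ t1 t2]]]] [->|->];
  rewrite ?(on_left_eq l1) ?(on_left_eq l2) ?(on_right_eq r1) ?(on_right_eq r2)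
    ?(on_bottom_eq b1) ?(on_bottom_eq b2) ?(on_top_eq t1) ?(on_top_eq t2); tauto.
Qed.

Lemma extreme_edge_hside_or_vline {e v} : extreme_edge vs e -> endpoint_of_edge vs v e ->
  (v.2 = y0 \/ v.2 = y1) \/ ((vtx vs e).1 = v.1 /\ (vtx vs (nxt vs e)).1 = v.1).
Proof.
case=> [[_ l1 l2]|[[_ r1 r2]|[[_ b1 b2]|[_ t1 t2]]]] [->|->];
  rewrite ?(on_left_eq l1) ?(on_left_eq l2) ?(on_right_eq r1) ?(on_right_eq r2)
    ?(on_bottom_eq b1) ?(on_bottom_eq b2) ?(on_top_eq t1) ?(on_top_eq t2); tauto.
Qed.

Lemma extreme_corner_box {i} : (3 <= size vs)%N -> general_position vs ->
  extreme_corner vs i ->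
  ((vtx vs i).1 = x0 \/ (vtx vs i).1 = x1) /\ ((vtx vs i).2 = y0 \/ (vtx vs i).2 = y1).
Proof.
move=> n3 gp [hi [j [k [jk ej ek pj pk]]]].
have [hj hk] := (extreme_edge_lt ej, extreme_edge_lt ek).
split.
- case: (extreme_edge_vside_or_hline ej pj) => [//|[j1 j2]].
  case: (extreme_edge_vside_or_hline ek pk) => [//|[k1 k2]].
  by case: (edges_not_on_line n3 gp _ _ _ (collinear_hline (vtx vs i).2) hj hk jk j1 j2 k1 k2).
- case: (extreme_edge_hside_or_vline ej pj) => [//|[j1 j2]].
  case: (extreme_edge_hside_or_vline ek pk) => [//|[k1 k2]].
  by case: (edges_not_on_line n3 gp _ _ _ (collinear_vline (vtx vs i).1) hj hk jk j1 j2 k1 k2).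
Qed.

End BoundingBox.

(** * Crosses of T-obstacles *)

Lemma cross_bounding_box {R : realType} {vs : seq (R * R)} {sH sV} :
  simple_polygon vs -> cross vs sH sV ->
  exists x0 x1 y0 y1, [/\ is_xmin vs x0, is_xmax vs x1, is_ymin vs y0, is_ymax vs y1
    & x0 < x1 /\ y0 < y1].
Proof.
case=> n3 gp _ _ [_ _ [ib [it [[hib b1 b2] [_ [y1 hy1 _] _] _]]]]
  [il [ir [[hil l1 l2] [_ [x1 hx1 _] _] _]]].
have [[y0 hy0 _] [x0 hx0 _]] := (b1, l1); have box := region_box hx0 hx1 hy0 hy1.
exists x0, x1, y0, y1; split=> //; split.
- have [t1 [t2 [t12 /box[/= ? ? _ _] /box[/= ? ? _ _]]]] :=
    hedge_points n3 gp hib (on_bottom_eq hy0 b1) (on_bottom_eq hy0 b2).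
  by have [?|?|e] := ltgtP t1 t2; [lra | lra | rewrite e eqxx in t12].
- have [t1 [t2 [t12 /box[_ _ /= ? ?] /box[_ _ /= ? ?]]]] :=
    vedge_points n3 gp hil (on_left_eq hx0 l1) (on_left_eq hx0 l2).
  by have [?|?|e] := ltgtP t1 t2; [lra | lra | rewrite e eqxx in t12].
Qed.

Section Obstacle.
Context {R : realType} {vs : seq (R * R)} {x0 x1 y0 y1 : R}.
Local Notation pt := (R * R)%type.
Local Notation O := (region vs).
Hypotheses (n3 : (3 <= size vs)%N) (gp : general_position vs) (rc : rect_convex vs)
  (hx0 : is_xmin vs x0) (hx1 : is_xmax vs x1) (hy0 : is_ymin vs y0) (hy1 : is_ymax vs y1).

Let hcO : hconvex O := l1_convex_hconvex (rect_convex_l1 rc).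
Let vcO : vconvex O := hconvex_swap.1 (l1_convex_hconvex (l1_convex_swap (rect_convex_l1 rc))).
Let O_box v (Ov : O v) := region_box hx0 hx1 hy0 hy1 Ov.

Lemma T_adjacent_corners : T_obstacle vs ->
  [\/ O (x0, y0) /\ O (x0, y1), O (x1, y0) /\ O (x1, y1),
      O (x0, y0) /\ O (x1, y0) | O (x0, y1) /\ O (x1, y1)].
Proof.
case=> _ _ [i1 [i2 [i12 c1 c2 _ side]]].
have [X1 Y1] := extreme_corner_box hx0 hx1 hy0 hy1 n3 gp c1.
have [X2 Y2] := extreme_corner_box hx0 hx1 hy0 hy1 n3 gp c2.
have ne : vtx vs i1 <> vtx vs i2 by move/(vtx_inj n3 gp c1.1 c2.1)/eqP; rewrite (negbTE i12).
have [r1 r2] := (vtx_region c1.1, vtx_region c2.1).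
case: side => -[s1 s2]; [constructor 1 | constructor 2 | constructor 3 | constructor 4].
- exact: vside_corners ne (on_left_eq hx0 s1) (on_left_eq hx0 s2) Y1 Y2 r1 r2.
- exact: vside_corners ne (on_right_eq hx1 s1) (on_right_eq hx1 s2) Y1 Y2 r1 r2.
- exact: hside_corners ne (on_bottom_eq hy0 s1) (on_bottom_eq hy0 s2) X1 X2 r1 r2.
- exact: hside_corners ne (on_top_eq hy1 s1) (on_top_eq hy1 s2) X1 X2 r1 r2.
Qed.

Lemma T_no_diagonal {a b : pt} : T_obstacle vs -> x0 < x1 -> y0 < y1 -> O a -> O b ->
  (a.1 = x0 /\ b.1 = x1) \/ (a.1 = x1 /\ b.1 = x0) ->
  (a.2 = y0 /\ b.2 = y1) \/ (a.2 = y1 /\ b.2 = y0) -> False.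
Proof.
case=> rl _ [i1 [i2 [_ _ _ only_i12 side]]] x01 y01 ra rb hx hy.
have corner (c : pt) : c.1 = x0 \/ c.1 = x1 -> c.2 = y0 \/ c.2 = y1 -> O c ->
    exists2 j, j = i1 \/ j = i2 & vtx vs j = c.
  move=> cx cy; rewrite [c]surjective_pairing => rc'.
  have [j /only_i12 ji ej] := box_corner_extreme hx0 hx1 hy0 hy1 n3 gp rl cx cy rc'.
  by exists j.
have [j1 j1i ea] : exists2 j, j = i1 \/ j = i2 & vtx vs j = a by apply: corner; tauto.
have [j2 j2i eb] : exists2 j, j = i1 \/ j = i2 & vtx vs j = b by apply: corner; tauto.
rewrite -ea -eb in hx hy.
have shared : (vtx vs i1).1 = (vtx vs i2).1 \/ (vtx vs i1).2 = (vtx vs i2).2.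
  by case: side => -[s1 s2]; [left | left | right | right];
    rewrite ?(on_left_eq hx0 s1) ?(on_left_eq hx0 s2) ?(on_right_eq hx1 s1) ?(on_right_eq hx1 s2)
      ?(on_bottom_eq hy0 s1) ?(on_bottom_eq hy0 s2) ?(on_top_eq hy1 s1) ?(on_top_eq hy1 s2).
by case: j1i j2i hx hy => -> [] -> [[? ?]|[? ?]] [[? ?]|[? ?]]; case: shared => ?; lra.
Qed.

(* Both L-paths between points below and above the box are the vertical
   segment through z. *)
Lemma skeleton_meets_vline {S} {z : pt} : skeleton vs S -> interior O z ->
  exists2 s, s \in S & exists2 u, segset s u & u.1 = z.1.
Proof.
move=> [_ sk] iz; have [_ _ z0 z1] := O_box _ (interior_mem iz).
have out (v : pt) : v.2 < y0 \/ y1 < v.2 -> ~ interior O v.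
  by move=> hv /interior_mem /O_box[_ _ ? ?]; case: hv; lra.
have zpq : seg (z.1, y0 - 1) (z.1, y1 + 1) z by apply/vsegE => //; split=> //=; nra.
have [|||s sS [u [Pu su]]] := sk (z.1, y0 - 1) (z.1, y1 + 1) _ _ _ _ (or_introl erefl).
- by apply: out; left => /=; lra.
- by apply: out; right => /=; lra.
- by move=> P [] ->; exists z; split=> //; [right | left].
by exists s => //; exists u => //; case: Pu => /seg_between1 /sqr_diff_le0.
Qed.

Lemma skeleton_meets_hline {S} {z : pt} : skeleton vs S -> interior O z ->
  exists2 s, s \in S & exists2 u, segset s u & u.2 = z.2.
Proof.
move=> [_ sk] iz; have [z0 z1 _ _] := O_box _ (interior_mem iz).
have out (v : pt) : v.1 < x0 \/ x1 < v.1 -> ~ interior O v.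
  by move=> hv /interior_mem /O_box[? ? _ _]; case: hv; lra.
have zpq : seg (x0 - 1, z.2) (x1 + 1, z.2) z by apply/hsegE => //; split=> //=; nra.
have [|||s sS [u [Pu su]]] := sk (x0 - 1, z.2) (x1 + 1, z.2) _ _ _ _ (or_introl erefl).
- by apply: out; left => /=; lra.
- by apply: out; right => /=; lra.
- by move=> P [] ->; exists z; split=> //; [left | right].
by exists s => //; exists u => //; case: Pu => /seg_between2 /sqr_diff_le0.
Qed.

Section Cross.
Context {sH sV : pt * pt}.
Hypothesis cr : cross vs sH sV.

Lemma cross_hspan v : O v -> (v.2 - sH.1.2) * (v.2 - sH.2.2) <= 0.
Proof.
case: cr => _ _ [ib [it [[_ b1 b2] [_ t1 t2] ends]]] _ /O_box[_ _ v0 v1].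
have bot p := edge_hline (on_bottom_eq hy0 b1) (on_bottom_eq hy0 b2) (p := p).
have top p := edge_hline (on_top_eq hy1 t1) (on_top_eq hy1 t2) (p := p).
by case: ends => -[/bot -> /top ->]; nra.
Qed.

Lemma cross_vspan v : O v -> (v.1 - sV.1.1) * (v.1 - sV.2.1) <= 0.
Proof.
case: cr => _ _ _ [il [ir [[_ l1 l2] [_ r1 r2] ends]]] /O_box[v0 v1 _ _].
have lft p := edge_vline (on_left_eq hx0 l1) (on_left_eq hx0 l2) (p := p).
have rgt p := edge_vline (on_right_eq hx1 r1) (on_right_eq hx1 r2) (p := p).
by case: ends => -[/lft -> /rgt ->]; nra.
Qed.

Lemma cross_skeleton : skeleton vs [:: sH; sV].
Proof.
have [sH_O sV_O _ _] := cr.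
split=> [s|p q np nq meet P LP]; first by rewrite !inE => /orP[] /eqP ->.
have Lmeet (a b : pt) : ~ interior O a -> ~ interior O b ->
    (seg a (b.1, a.2) `|` seg (b.1, a.2) b) `&` interior O !=set0 ->
    (seg a (a.1, b.2) `|` seg (a.1, b.2) b) `&` interior O !=set0 ->
    exists2 s, s \in [:: sH; sV] & (seg a (b.1, a.2) `|` seg (b.1, a.2) b) `&` segset s !=set0.
  move=> na nb m1 m2.
  have [v Pv [hv|hv]] :=
    Lpath_meets_cross hcO vcO sH_O sV_O cross_hspan cross_vspan na nb m1 m2.
  - by exists sH; [rewrite mem_head | exists v].
  - by exists sV; [rewrite !inE eqxx orbT | exists v].
have m1 := meet _ (or_introl erefl); have m2 := meet _ (or_intror erefl).
case: LP => ->; first exact: Lmeet.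
rewrite seg_union_sym; rewrite seg_union_sym in m1; rewrite seg_union_sym in m2.
exact: Lmeet.
Qed.

Lemma hsides_two_points Y : Y = y0 \/ Y = y1 ->
  exists t1 t2, [/\ t1 != t2, O (t1, Y) & O (t2, Y)].
Proof.
have [_ _ [ib [it [[hib b1 b2] [hit t1 t2] _]]] _] := cr.
case=> ->; first exact: hedge_points n3 gp hib (on_bottom_eq hy0 b1) (on_bottom_eq hy0 b2).
exact: hedge_points n3 gp hit (on_top_eq hy1 t1) (on_top_eq hy1 t2).
Qed.

Lemma vsides_two_points X : X = x0 \/ X = x1 ->
  exists t1 t2, [/\ t1 != t2, O (X, t1) & O (X, t2)].
Proof.
have [_ _ _ [il [ir [[hil l1 l2] [hir r1 r2] _]]]] := cr.
case=> ->; first exact: vedge_points n3 gp hil (on_left_eq hx0 l1) (on_left_eq hx0 l2).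
exact: vedge_points n3 gp hir (on_right_eq hx1 r1) (on_right_eq hx1 r2).
Qed.

Lemma skeleton_size_ge2 S : T_obstacle vs -> x0 < x1 -> y0 < y1 ->
  skeleton vs S -> (2 <= size S)%N.
Proof.
move=> T x01 y01 skS.
have [DX DY] := box_lines_meet_interior hcO vcO O_box hsides_two_points vsides_two_points
  (T_adjacent_corners T).
case: S skS => [|s [|? ?]] skS //.
  have [z iz _] : exists2 z, interior O z & z.1 = (x0 + x1) / 2 by apply: DX; apply/andP; lra.
  by have [s] := skeleton_meets_vline skS iz; rewrite in_nil.
have HX x : x0 < x < x1 -> (x - s.1.1) * (x - s.2.1) <= 0.
  move=> /DX[z iz <-]; have [s' + [u su <-]] := skeleton_meets_vline skS iz.
  by rewrite mem_seq1 => /eqP ss'; rewrite ss' in su; exact: seg_between1 su.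
have HY y : y0 < y < y1 -> (y - s.1.2) * (y - s.2.2) <= 0.
  move=> /DY[z iz <-]; have [s' + [u su <-]] := skeleton_meets_hline skS iz.
  by rewrite mem_seq1 => /eqP ss'; rewrite ss' in su; exact: seg_between2 su.
have s_O := skS.1 s (mem_head _ _).
have [r1 r2] : O s.1 /\ O s.2 by split; apply: s_O; [exact: seg_start | exact: seg_end].
have [/= a0 a1 a2 a3] := O_box _ r1; have [/= b0 b1 b2 b3] := O_box _ r2.
exfalso; apply: (T_no_diagonal T x01 y01 r1 r2).
  by apply: (spanning_ends x01 _ _ HX); apply/andP.
by apply: (spanning_ends y01 _ _ HY); apply/andP.
Qed.

End Cross.

End Obstacle.

Theorem lemma8 (R : realType) (vs : seq (R * R)) (sH sV : (R * R) * (R * R)) :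
  simple_polygon vs -> T_obstacle vs -> cross vs sH sV ->
  min_skeleton vs [:: sH; sV].
Proof.
move=> sp T cr; have [n3 gp _ _] := sp; have [_ rc _] := T.
have [x0 [x1 [y0 [y1 [hx0 hx1 hy0 hy1 [x01 y01]]]]]] := cross_bounding_box sp cr.
split; first exact: (cross_skeleton rc hx0 hx1 hy0 hy1 cr).
by move=> S; apply: (skeleton_size_ge2 n3 gp rc hx0 hx1 hy0 hy1 cr S T x01 y01).
Qed.
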